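(* Let $\mathcal R$ be a Riemann surface, $f:\mathcal R\to\mathrm{Nil}_3$ a conformal minimal immersion which is nowhere vertical with upward normal, and $g:\mathcal R\to\mathbb D=\{|w|<1\}\cong\mathbb H^2$ its normal Gauss map. Let $\gamma\in\mathrm{Aut}(\mathcal R)$. (a) If $f\circ\gamma=\rho\circ f$ for some $\rho=(p,e^{i\theta})\in\mathrm{Iso}_\circ(\mathrm{Nil}_3)$, then $g\circ\gamma=e^{i\theta}g$, i.e. $g$ is symmetric with respect to $(\gamma,R)$ where $R$ is the rotation of $\mathbb H^2$ about $0$ by the angle $\theta$ of the fiber rotation of $\rho$. (b) Conversely, if $g\circ\gamma=e^{i\theta}g$ for some $\theta\in\mathbb R$ (i.e. $g\circ\gamma=R\circ g$ with $R$ a rotation about $0$), then there exists $\rho\in\mathrm{Iso}_\circ(\mathrm{Nil}_3)$ whose fiber rotation has angle $\theta$ such that $f\circ\gamma=\rho\circ f$.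
   Context: $\mathrm{Nil}_3$ denotes $\mathbb R^3$ with the group law $(a_1,a_2,a_3)\cdot(x_1,x_2,x_3)=(a_1+x_1,a_2+x_2,a_3+x_3+\tfrac12(a_1x_2-a_2x_1))$ and the left-invariant Riemannian metric $dx_1^2+dx_2^2+(dx_3+\tfrac12(x_2dx_1-x_1dx_2))^2$; its center is $\{(0,0,c):c\in\mathbb R\}$. The identity component of its isometry group is $\mathrm{Iso}_\circ(\mathrm{Nil}_3)\cong\mathrm{Nil}_3\rtimes\mathrm U_1$, where $(a,e^{i\theta})$ acts by $(a,e^{i\theta}).(x_1,x_2,x_3)=a\cdot(\cos\theta\, x_1-\sin\theta\, x_2,\ \sin\theta\, x_1+\cos\theta\, x_2,\ x_3)$, and the group law is composition of these maps. The number $\theta$ (mod $2\pi$) is the angle of the fiber rotation of $(a,e^{i\theta})$; elements with $\theta=0$ are identified with $\mathrm{Nil}_3$ (left translations). Normal Gauss map: let $e_1,e_2,e_3$ be the standard basis of the Lie algebra $\mathfrak{nil}_3\cong\mathbb R^3$ (with $[e_1,e_2]=e_3$). For a conformal immersion $f$ and local conformal coordinate $z$, write $f^{-1}\partial_z f=\phi_1e_1+\phi_2e_2+\phi_3e_3$ (left translation to the identity). There are functions $\psi_1,\psi_2$ (unique up to a common sign) with $\phi_1=\overline{\psi_2}^2-\psi_1^2$, $\phi_2=i(\overline{\psi_2}^2+\psi_1^2)$, $\phi_3=2\psi_1\overline{\psi_2}$. The left-translated unit normal is $f^{-1}N=\big(2\,\mathrm{Re}(\psi_1\psi_2)e_1+2\,\mathrm{Im}(\psi_1\psi_2)e_2+(|\psi_1|^2-|\psi_2|^2)e_3\big)/(|\psi_1|^2+|\psi_2|^2)$,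 and the normal Gauss map is $g=\psi_2/\overline{\psi_1}$ (stereographic projection of $f^{-1}N$ from the south pole). $f$ is nowhere vertical if $|\psi_1|\ne|\psi_2|$ everywhere (the vector field $\partial_{x_3}$ is nowhere tangent), and has upward normal if $|\psi_1|>|\psi_2|$, so that $g$ takes values in the unit disk, viewed as the Poincaré model of $\mathbb H^2=\mathrm{SU}_{1,1}/\mathrm U_1$. *)

From Stdlib Require Import Reals List.
From Coquelicot Require Import Coquelicot.
Set Implicit Arguments.
Open Scope R_scope.

Definition Nil3 := (R * R * R)%type.
Definition n1 (x : Nil3) : R := fst (fst x).
Definition n2 (x : Nil3) : R := snd (fst x).
Definition n3 (x : Nil3) : R := snd x.

Definition nil_mul (a x : Nil3) : Nil3 :=
  (n1 a + n1 x, n2 a + n2 x, n3 a + n3 x + / 2 * (n1 a * n2 x - n2 a * n1 x)).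

Definition fiber_rot (theta : R) (x : Nil3) : Nil3 :=
  (cos theta * n1 x - sin theta * n2 x, sin theta * n1 x + cos theta * n2 x, n3 x).

(* the element (p, e^{i theta}) of Iso_o(Nil_3) = Nil_3 x| U_1, acting on Nil_3 *)
Definition iso_act (p : Nil3) (theta : R) (x : Nil3) : Nil3 :=
  nil_mul p (fiber_rot theta x).

(* components, in the left-invariant orthonormal frame e1,e2,e3 (i.e. after
   left translation to the identity), of a tangent vector v at the point x,
   for the metric dx1^2+dx2^2+(dx3+1/2(x2 dx1 - x1 dx2))^2 *)
Definition left_comp (x v : Nil3) : Nil3 :=
  (n1 v, n2 v, n3 v + / 2 * (n2 x * n1 v - n1 x * n2 v)).

Definition dot3 (u v : Nil3) : R := n1 u * n1 v + n2 u * n2 v + n3 u * n3 v.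
Definition cross3 (u v : Nil3) : Nil3 :=
  (n2 u * n3 v - n3 u * n2 v, n3 u * n1 v - n1 u * n3 v, n1 u * n2 v - n2 u * n1 v).

(* symmetric part of the Levi-Civita connection on left-invariant fields of
   nil_3 ([e1,e2] = e3):  nabla_A A  *)
Definition nabla_sym (A : Nil3) : Nil3 := (n2 A * n3 A, - (n1 A * n3 A), 0).

Definition dx (u : C -> R) : C -> R := fun z => Derive (fun t => u (t, snd z)) (fst z).
Definition dy (u : C -> R) : C -> R := fun z => Derive (fun t => u (fst z, t)) (snd z).

Inductive pdir := Px | Py.
Fixpoint pder (l : list pdir) (u : C -> R) : C -> R :=
  match l with
  | nil => u
  | Px :: l' => dx (pder l' u)
  | Py :: l' => dy (pder l' u)
  end.

Definition smooth_on (D : C -> Prop) (u : C -> R) : Prop :=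
  forall (l : list pdir) (z : C), D z ->
    ex_derive (fun t => pder l u (t, snd z)) (fst z) /\
    ex_derive (fun t => pder l u (fst z, t)) (snd z) /\
    continuous (pder l u) z.

Definition C_holo_at (h : C -> C) (z : C) : Prop := ex_derive (K := C_AbsRing) h z.

Record atlas (X : Type) := {
  chart : Type;
  cdom : chart -> C -> Prop;
  cpar : chart -> C -> X             (* psi_i : D_i -> X, inverse of the chart map *)
}.

Section Surf.
Variable X : Type.
Variable A : atlas X.

Definition s_open (O : X -> Prop) : Prop :=
  forall i, open (fun z => cdom A i z /\ O (cpar A i z)).

Definition overlap (i j : chart A) (z : C) : Prop :=
  cdom A i z /\ exists w, cdom A j w /\ cpar A j w = cpar A i z.

Definition riemann_surface : Prop :=
  (forall i, open (cdom A i)) /\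
  (forall i z w, cdom A i z -> cdom A i w -> cpar A i z = cpar A i w -> z = w) /\
  (forall x, exists i z, cdom A i z /\ cpar A i z = x) /\
  (forall i j, open (overlap i j) /\
     exists h : C -> C, forall z, overlap i j z ->
       cdom A j (h z) /\ cpar A j (h z) = cpar A i z /\ C_holo_at h z) /\
  (forall x y, x <> y -> exists U V, s_open U /\ s_open V /\ U x /\ V y /\
       forall p, ~ (U p /\ V p)) /\
  (forall U V, s_open U -> s_open V -> (forall p, U p \/ V p) ->
       (forall p, ~ (U p /\ V p)) -> (exists p, U p) -> forall p, U p).

Definition holo_map (gam : X -> X) : Prop :=
  (forall O, s_open O -> s_open (fun p => O (gam p))) /\
  forall i j, exists h : C -> C, forall z,
    cdom A i z -> (exists w, cdom A j w /\ cpar A j w = gam (cpar A i z)) ->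
    cdom A j (h z) /\ cpar A j (h z) = gam (cpar A i z) /\ C_holo_at h z.

Definition automorphism (gam : X -> X) : Prop :=
  exists gam', (forall p, gam' (gam p) = p) /\ (forall p, gam (gam' p) = p) /\
    holo_map gam /\ holo_map gam'.

Variable f : X -> Nil3.

Definition floc (i : chart A) (k : nat) : C -> R := fun z =>
  match k with 0%nat => n1 (f (cpar A i z)) | 1%nat => n2 (f (cpar A i z))
             | _ => n3 (f (cpar A i z)) end.

Definition Fx (i : chart A) (z : C) : Nil3 := (dx (floc i 0) z, dx (floc i 1) z, dx (floc i 2) z).
Definition Fy (i : chart A) (z : C) : Nil3 := (dy (floc i 0) z, dy (floc i 1) z, dy (floc i 2) z).

Definition Lx (i : chart A) (z : C) : Nil3 := left_comp (f (cpar A i z)) (Fx i z).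
Definition Ly (i : chart A) (z : C) : Nil3 := left_comp (f (cpar A i z)) (Fy i z).

Definition smooth_map : Prop :=
  forall i k, smooth_on (cdom A i) (floc i k).

Definition conformal_immersion : Prop :=
  smooth_map /\
  forall i z, cdom A i z ->
    dot3 (Lx i z) (Lx i z) = dot3 (Ly i z) (Ly i z) /\
    0 < dot3 (Lx i z) (Lx i z) /\ dot3 (Lx i z) (Ly i z) = 0.

(* tension  nabla_{d_x} f_x + nabla_{d_y} f_y, in the basis e1,e2,e3 *)
Definition tension (i : chart A) (z : C) : Nil3 :=
  let c k v := match k with 0%nat => n1 v | 1%nat => n2 v | _ => n3 v end in
  let d k := dx (fun w => c k (Lx i w)) z + dy (fun w => c k (Ly i w)) z in
  let s := nabla_sym (Lx i z) in let s' := nabla_sym (Ly i z) in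
  (d 0%nat + n1 s + n1 s', d 1%nat + n2 s + n2 s', d 2%nat + n3 s + n3 s').

Definition unit_normal (i : chart A) (z : C) : Nil3 :=
  let c := cross3 (Lx i z) (Ly i z) in
  let r := sqrt (dot3 c c) in (n1 c / r, n2 c / r, n3 c / r).

(* minimal: mean curvature zero, i.e. the trace of the second fundamental form
   (normal component of the tension in a conformal chart) vanishes *)
Definition minimal : Prop :=
  forall i z, cdom A i z -> dot3 (tension i z) (unit_normal i z) = 0.

Definition nowhere_vertical : Prop :=
  forall i z, cdom A i z -> n3 (unit_normal i z) <> 0.
Definition upward_normal : Prop :=
  forall i z, cdom A i z -> 0 < n3 (unit_normal i z).

(* normal Gauss map: stereographic projection of f^{-1} N from the south pole *)
Definition stereo (n : Nil3) : C := (n1 n / (1 + n3 n), n2 n / (1 + n3 n)).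
Definition is_normal_gauss_map (g : X -> C) : Prop :=
  forall i z, cdom A i z -> g (cpar A i z) = stereo (unit_normal i z).

End Surf.

Definition eitheta (theta : R) : C := (cos theta, sin theta).

(* An isometry [(p, e^{i th})] of Nil3 acts on the left-translated frame
   [f^-1 f_x, f^-1 f_y] by the fiber rotation of angle [th], and a holomorphic change
   of chart with derivative [a + i b] acts on it by the rotation-dilation [a + i b].
   So if [f o gam = rho o f], the frames of [f o gam] and [f] differ by that rotation,
   hence so do the unit normals, and stereographic projection gives [g o gam = e^{i th} g].

   Conversely, a conformal minimal nowhere vertical immersion is recovered from its unit
   normal by [f^-1 f_x = - (N x N_x + N_y) / N_3^2].  If [g o gam = e^{i th} g], the unit
   normal of [f o gam] is the rotated normal of [f], so the frames of [f o gam] and of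
   [fiber_rot th o f] coincide and [(f o gam) (fiber_rot th o f)^-1] has zero derivative.
   On the connected surface it is a constant [p], i.e. [f o gam = (p, e^{i th}) o f]. *)

From Stdlib Require Import Reals Lra Nsatz Classical FunctionalExtensionality.
From Coquelicot Require Import Coquelicot.
Open Scope R_scope.

(** * Vectors and curves in R^3 *)

Lemma nil3_eq (u v : Nil3) : n1 u = n1 v -> n2 u = n2 v -> n3 u = n3 v -> u = v.
Proof. destruct u as [[u1 u2] u3], v as [[v1 v2] v3]; cbv; intros; subst; reflexivity. Qed.

Definition vadd (u v : Nil3) : Nil3 := (n1 u + n1 v, n2 u + n2 v, n3 u + n3 v).
Definition vscale (k : R) (u : Nil3) : Nil3 := (k * n1 u, k * n2 u, k * n3 u).
Definition vcomb (a b : R) (u v : Nil3) : Nil3 := vadd (vscale a u) (vscale b v).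

Definition is_derive3 (F : R -> Nil3) (t0 : R) (d : Nil3) : Prop :=
  is_derive (fun t => n1 (F t)) t0 (n1 d) /\ is_derive (fun t => n2 (F t)) t0 (n2 d) /\
  is_derive (fun t => n3 (F t)) t0 (n3 d).

Lemma is_derive3_ext_loc (F G : R -> Nil3) t0 d : locally t0 (fun t => F t = G t) ->
  is_derive3 F t0 d -> is_derive3 G t0 d.
Proof.
  intros L (H1 & H2 & H3). split; [|split];
    [ apply (is_derive_ext_loc (fun t => n1 (F t))) | apply (is_derive_ext_loc (fun t => n2 (F t)))
    | apply (is_derive_ext_loc (fun t => n3 (F t))) ]; auto;
    apply filter_imp with (2 := L); intros t E; rewrite E; reflexivity.
Qed.

Lemma is_derive3_unique_loc F G t0 d1 d2 : is_derive3 F t0 d1 -> is_derive3 G t0 d2 ->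
  locally t0 (fun t => F t = G t) -> d1 = d2.
Proof.
  intros HF (K1 & K2 & K3) L. destruct (is_derive3_ext_loc F G t0 d1 L HF) as (H1 & H2 & H3).
  apply nil3_eq; [rewrite <- (is_derive_unique _ _ _ H1) | rewrite <- (is_derive_unique _ _ _ H2)
    | rewrite <- (is_derive_unique _ _ _ H3)]; apply is_derive_unique; assumption.
Qed.

Ltac rewrite_known_derives := repeat match goal with |- context [Derive ?h ?t] =>
  match goal with H : is_derive _ _ _ |- _ =>
    let E := fresh in assert (E : Derive h t = _) by (apply is_derive_unique; exact H);
    rewrite E; clear E end end.

Ltac solve_auto_derive_goals :=
  lazymatch goal with
  | |- _ = _ => rewrite_known_derives; ring
  | _ => repeat split; eexists; eassumption
  end.

Lemma nil3_curve_eta (P : R -> Nil3) : exists p1 p2 p3 : R -> R, P = fun t => (p1 t, p2 t, p3 t).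
Proof.
  exists (fun t => n1 (P t)), (fun t => n2 (P t)), (fun t => n3 (P t)).
  apply functional_extensionality; intro t; now destruct (P t) as [[]].
Qed.

(* Curves are split into coordinate functions so that [auto_derive] only sees real functions. *)
Ltac destruct_nil3 := repeat match goal with
  | v : Nil3 |- _ => let a := fresh "a" in let b := fresh "b" in let c := fresh "c" in
      destruct v as [[a b] c]
  | P : R -> Nil3 |- _ => let p1 := fresh "p" in let p2 := fresh "p" in let p3 := fresh "p" in
      destruct (nil3_curve_eta P) as (p1 & p2 & p3 & ->)
  end.

Ltac unfold_nil3 :=
  cbv [vcomb vadd vscale cross3 dot3 left_comp fiber_rot iso_act nil_mul nabla_sym n1 n2 n3 fst snd] in *.

Lemma vcomb_1_0 u v : vcomb 1 0 u v = u.
Proof. apply nil3_eq; unfold_nil3; ring. Qed.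

Lemma vcomb_0_1 u v : vcomb 0 1 u v = v.
Proof. apply nil3_eq; unfold_nil3; ring. Qed.

Ltac solve_is_derive3 :=
  destruct_nil3; unfold is_derive3 in *; unfold_nil3;
  repeat match goal with H : _ /\ _ |- _ => destruct H end;
  lazymatch goal with |- _ /\ _ => split; [|split] | _ => idtac end;
  auto_derive; solve_auto_derive_goals.

Definition left_comp_d (P V dP dV : Nil3) : Nil3 :=
  (n1 dV, n2 dV, n3 dV + / 2 * (n2 dP * n1 V + n2 P * n1 dV - n1 dP * n2 V - n1 P * n2 dV)).

Lemma is_derive3_left_comp P V t0 dP dV : is_derive3 P t0 dP -> is_derive3 V t0 dV ->
  is_derive3 (fun t => left_comp (P t) (V t)) t0 (left_comp_d (P t0) (V t0) dP dV).
Proof. intros. unfold left_comp_d. solve_is_derive3. Qed.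

Definition cross3_d (u v du dv : Nil3) : Nil3 := vadd (cross3 du v) (cross3 u dv).

Lemma is_derive3_cross3 u v t0 du dv : is_derive3 u t0 du -> is_derive3 v t0 dv ->
  is_derive3 (fun t => cross3 (u t) (v t)) t0 (cross3_d (u t0) (v t0) du dv).
Proof. intros. unfold cross3_d. solve_is_derive3. Qed.

Lemma is_derive_dot3 u v t0 du dv : is_derive3 u t0 du -> is_derive3 v t0 dv ->
  is_derive (fun t => dot3 (u t) (v t)) t0 (dot3 du (v t0) + dot3 (u t0) dv).
Proof. intros. solve_is_derive3. Qed.

Definition iso_act_d (p : Nil3) (th : R) (d : Nil3) : Nil3 :=
  (cos th * n1 d - sin th * n2 d, sin th * n1 d + cos th * n2 d,
   n3 d + / 2 * (n1 p * (sin th * n1 d + cos th * n2 d) - n2 p * (cos th * n1 d - sin th * n2 d))).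

Lemma is_derive3_iso_act p th F t0 d : is_derive3 F t0 d ->
  is_derive3 (fun t => iso_act p th (F t)) t0 (iso_act_d p th d).
Proof. intros. unfold iso_act_d. solve_is_derive3. Qed.

Lemma is_derive3_fiber_rot th F t0 d : is_derive3 F t0 d ->
  is_derive3 (fun t => fiber_rot th (F t)) t0 (fiber_rot th d).
Proof. intros. solve_is_derive3. Qed.

Definition nil_inv (x : Nil3) : Nil3 := (- n1 x, - n2 x, - n3 x).

Definition mul_inv_d (U V dU dV : Nil3) : Nil3 :=
  (n1 dU - n1 dV, n2 dU - n2 dV,
   n3 dU - n3 dV + / 2 * (n1 dU * (- n2 V) + n1 U * (- n2 dV) - (n2 dU * (- n1 V) + n2 U * (- n1 dV)))).

Lemma is_derive3_mul_inv U V t0 dU dV : is_derive3 U t0 dU -> is_derive3 V t0 dV ->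
  is_derive3 (fun t => nil_mul (U t) (nil_inv (V t))) t0 (mul_inv_d (U t0) (V t0) dU dV).
Proof. intros. unfold mul_inv_d, nil_inv. solve_is_derive3. Qed.

Lemma mul_inv_d_zero U V dU dV : left_comp U dU = left_comp V dV -> mul_inv_d U V dU dV = (0, 0, 0).
Proof.
  intros E. assert (E1 := f_equal n1 E). assert (E2 := f_equal n2 E). assert (E3 := f_equal n3 E).
  clear E. revert E1 E2 E3. unfold mul_inv_d. destruct_nil3; unfold_nil3. intros E1 E2 E3.
  subst. f_equal; [f_equal|]; lra.
Qed.

Lemma nil_mul_inv_mul u v : nil_mul (nil_mul u (nil_inv v)) v = u.
Proof. unfold nil_inv. destruct_nil3; apply nil3_eq; unfold_nil3; field. Qed.

Definition normalize (c : Nil3) : Nil3 :=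
  let r := sqrt (dot3 c c) in (n1 c / r, n2 c / r, n3 c / r).

Lemma unit_normal_normalize X (A : atlas X) f i z :
  unit_normal A f i z = normalize (cross3 (Lx A f i z) (Ly A f i z)).
Proof. reflexivity. Qed.

Definition normalize_d (c dc : Nil3) : Nil3 :=
  let r := sqrt (dot3 c c) in
  let k := dot3 c dc / (r * r * r) in
  (n1 dc / r - n1 c * k, n2 dc / r - n2 c * k, n3 dc / r - n3 c * k).

Lemma is_derive3_normalize c t0 dc : is_derive3 c t0 dc -> 0 < dot3 (c t0) (c t0) ->
  is_derive3 (fun t => normalize (c t)) t0 (normalize_d (c t0) dc).
Proof.
  intros Hc Hpos. unfold normalize, normalize_d. destruct_nil3; unfold is_derive3 in *; unfold_nil3.
  destruct Hc as (? & ? & ?).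
  set (q := p t0 * p t0 + p0 t0 * p0 t0 + p1 t0 * p1 t0) in *.
  assert (Hs : 0 < sqrt q) by (apply sqrt_lt_R0; exact Hpos).
  split; [|split]; auto_derive; fold q;
    (lazymatch goal with
     | |- _ = _ => rewrite_known_derives; field; lra
     | _ => repeat split; try (eexists; eassumption); lra
     end).
Qed.

(** * The unit normal and the representation formula *)

Lemma dot3_cross3 (u v : Nil3) :
  dot3 (cross3 u v) (cross3 u v) = dot3 u u * dot3 v v - dot3 u v * dot3 u v.
Proof. destruct_nil3; unfold_nil3; ring. Qed.

Lemma sqrt_dot3_cross3_conformal (A B : Nil3) :
  dot3 A A = dot3 B B -> dot3 A B = 0 -> 0 < dot3 A A ->
  sqrt (dot3 (cross3 A B) (cross3 A B)) = dot3 A A.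
Proof.
  intros H1 H2 H3. rewrite dot3_cross3, H2, <- H1, Rmult_0_l, Rminus_0_r.
  apply sqrt_square. lra.
Qed.

Definition tangent_of_normal (N NX NY : Nil3) : Nil3 :=
  vscale (- / (n3 N * n3 N)) (vadd (cross3 N NX) NY).

(* [A], [B] stand for [f^-1 f_x], [f^-1 f_y] and [AX], [AY], [BX], [BY] for their partial
   derivatives; the hypotheses are conformality, its derivative in [y], the structure
   equation, minimality and non-verticality. *)
Lemma tangent_of_normal_spec (A B AX AY BX BY : Nil3) :
  0 < dot3 A A -> dot3 A A = dot3 B B -> dot3 A B = 0 ->
  dot3 A AY = dot3 B BY ->
  BX = (n1 AY, n2 AY, n3 AY - n3 (cross3 A B)) ->
  dot3 (vadd (vadd AX BY) (vadd (nabla_sym A) (nabla_sym B))) (cross3 A B) = 0 ->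
  n3 (cross3 A B) <> 0 ->
  A = tangent_of_normal (normalize (cross3 A B))
        (normalize_d (cross3 A B) (cross3_d A B AX BX))
        (normalize_d (cross3 A B) (cross3_d A B AY BY)).
Proof.
  intros He Hd2 Hd1 Hd3 HI Hm Hc3. subst BX.
  unfold tangent_of_normal, normalize, normalize_d. cbv zeta.
  rewrite (sqrt_dot3_cross3_conformal A B Hd2 Hd1 He).
  set (c := cross3 A B) in *.
  set (e := dot3 A A) in *.
  set (d1 := dot3 A B) in *.
  set (d2 := e - dot3 B B).
  set (d3 := dot3 A AY - dot3 B BY).
  set (dm := dot3 (vadd (vadd AX BY) (vadd (nabla_sym A) (nabla_sym B))) c) in *.
  (* [A] minus the right-hand side is [Q / (e * n3 c ^ 2)], where [Q] is linear in the
     quantities [d1], [d2], [d3], [dm] that the hypotheses make vanish. *)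
  set (W := dot3 A AY * d2 + e * d3 + d1 * (dot3 B AY + dot3 A BY)).
  set (G := vadd (vscale (n3 A * n3 B * d2 + (n3 B * n3 B - n3 A * n3 A) * d1 - dm) B)
       (vadd (vscale d1 (vadd (cross3 AY A) (vscale (-1) (cross3 BY B))))
          (vadd (vscale d2 (cross3 A BY)) (vscale (- d3) c)))).
  set (Q := vadd (vscale e G) (vscale W c)).
  assert (HQ : Q = (0, 0, 0)).
  { assert (D2 : d2 = 0) by (unfold d2; lra). assert (D3 : d3 = 0) by (unfold d3; lra).
    unfold Q, G, W. rewrite D2, D3, Hd1, Hm. apply nil3_eq; unfold_nil3; ring. }
  assert (Hc : n3 c = n1 A * n2 B - n2 A * n1 B) by reflexivity.
  assert (HE : e <> 0) by lra.
  apply nil3_eq;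
  [ transitivity (n1 A - n1 Q / (e * (n3 c * n3 c)))
  | transitivity (n2 A - n2 Q / (e * (n3 c * n3 c)))
  | transitivity (n3 A - n3 Q / (e * (n3 c * n3 c))) ];
  try (rewrite HQ; cbv [n1 n2 n3 fst snd]; field; split; assumption);
  rewrite Hc in Hc3 |- *; unfold Q, G, W, d1, d2, d3, dm, c, e;
  destruct_nil3; cbv [dot3 cross3 cross3_d vadd vscale nabla_sym n1 n2 n3 fst snd] in *;
  field; split; auto.
Qed.

Lemma sin_cos_sq th : sin th * sin th + cos th * cos th = 1.
Proof. exact (sin2_cos2 th). Qed.

Ltac solve_fiber_rot th :=
  destruct_nil3; try apply nil3_eq; unfold_nil3;
  generalize (sin_cos_sq th); generalize (sin th) (cos th); generalize (/ 2); intros; nsatz.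

Lemma fiber_rot_cross3 th u v : cross3 (fiber_rot th u) (fiber_rot th v) = fiber_rot th (cross3 u v).
Proof. solve_fiber_rot th. Qed.

Lemma dot3_fiber_rot th u v : dot3 (fiber_rot th u) (fiber_rot th v) = dot3 u v.
Proof. solve_fiber_rot th. Qed.

Lemma left_comp_fiber_rot th F V :
  left_comp (fiber_rot th F) (fiber_rot th V) = fiber_rot th (left_comp F V).
Proof. solve_fiber_rot th. Qed.

Lemma left_comp_iso_act p th F V :
  left_comp (iso_act p th F) (iso_act_d p th V) = fiber_rot th (left_comp F V).
Proof. unfold iso_act_d. solve_fiber_rot th. Qed.

Lemma left_comp_vcomb F a b U V :
  left_comp F (vcomb a b U V) = vcomb a b (left_comp F U) (left_comp F V).
Proof. destruct_nil3; apply nil3_eq; unfold_nil3; ring. Qed.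

Lemma cross3_d_vcomb A B a b X1 X2 Y1 Y2 :
  cross3_d A B (vcomb a b X1 X2) (vcomb a b Y1 Y2) =
  vcomb a b (cross3_d A B X1 Y1) (cross3_d A B X2 Y2).
Proof. unfold cross3_d. destruct_nil3; apply nil3_eq; unfold_nil3; ring. Qed.

Lemma normalize_d_vcomb c a b u v :
  normalize_d c (vcomb a b u v) = vcomb a b (normalize_d c u) (normalize_d c v).
Proof. unfold normalize_d; cbv zeta. destruct_nil3; apply nil3_eq; unfold_nil3; unfold Rdiv; ring. Qed.

Lemma normalize_fiber_rot th c : normalize (fiber_rot th c) = fiber_rot th (normalize c).
Proof.
  unfold normalize. cbv zeta. rewrite dot3_fiber_rot. generalize (sqrt (dot3 c c)). intro r.
  destruct_nil3; apply nil3_eq; unfold_nil3; unfold Rdiv; ring.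
Qed.

Lemma normalize_scale k c : 0 < k -> 0 < dot3 c c -> normalize (vscale k c) = normalize c.
Proof.
  intros Hk Hc. unfold normalize. cbv zeta.
  assert (E : dot3 (vscale k c) (vscale k c) = (k * k) * dot3 c c)
    by (destruct_nil3; unfold_nil3; ring).
  rewrite E, sqrt_mult_alt, sqrt_square by nra.
  assert (Hr : 0 < sqrt (dot3 c c)) by (apply sqrt_lt_R0; auto).
  revert Hr. generalize (sqrt (dot3 c c)). intros r Hr.
  destruct_nil3; apply nil3_eq; unfold_nil3; field; lra.
Qed.

Lemma dot3_normalize c : 0 < dot3 c c -> dot3 (normalize c) (normalize c) = 1.
Proof.
  intros Hc. unfold normalize. cbv zeta. assert (E := sqrt_sqrt _ (Rlt_le _ _ Hc)).
  assert (Hr : 0 < sqrt (dot3 c c)) by (apply sqrt_lt_R0; auto).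
  set (r := sqrt (dot3 c c)) in *.
  transitivity (dot3 c c / (r * r)).
  - unfold dot3 at 1. cbn [n1 n2 n3 fst snd]. unfold dot3. field. lra.
  - rewrite E. field. lra.
Qed.

Lemma dot3_normalize_d c dc : 0 < dot3 c c -> dot3 (normalize c) (normalize_d c dc) = 0.
Proof.
  intros Hc. unfold normalize, normalize_d. cbv zeta. assert (E := sqrt_sqrt _ (Rlt_le _ _ Hc)).
  assert (Hr : 0 < sqrt (dot3 c c)) by (apply sqrt_lt_R0; auto).
  set (r := sqrt (dot3 c c)) in *.
  transitivity (dot3 c dc / (r * r) * (1 - dot3 c c / (r * r))).
  - unfold dot3 at 1. cbn [n1 n2 n3 fst snd]. unfold dot3. field. lra.
  - rewrite E. field. lra.
Qed.

Lemma dot3_normalize_cross3_l A B : dot3 (normalize (cross3 A B)) A = 0.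
Proof.
  unfold normalize. cbv zeta. generalize (sqrt (dot3 (cross3 A B) (cross3 A B))). intro r.
  destruct_nil3; unfold_nil3; unfold Rdiv; ring.
Qed.

Lemma dot3_normalize_eq0 c v : 0 < dot3 c c -> dot3 v (normalize c) = 0 -> dot3 v c = 0.
Proof.
  intros Hc. assert (Hr : 0 < sqrt (dot3 c c)) by (apply sqrt_lt_R0; auto).
  unfold normalize. cbv zeta. revert Hr. generalize (sqrt (dot3 c c)). intros r Hr E.
  replace (dot3 v c) with (dot3 v (n1 c / r, n2 c / r, n3 c / r) * r) by (unfold_nil3; field; lra).
  rewrite E. ring.
Qed.

Lemma n3_normalize_neq0 c : n3 (normalize c) <> 0 -> n3 c <> 0.
Proof. unfold normalize. cbn. intros H E. apply H. rewrite E. unfold Rdiv. ring. Qed.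

Lemma cross3_normalize_conformal A B : 0 < dot3 A A -> dot3 A A = dot3 B B -> dot3 A B = 0 ->
  B = cross3 (normalize (cross3 A B)) A.
Proof.
  intros He H1 H2. unfold normalize. cbv zeta. rewrite (sqrt_dot3_cross3_conformal A B H1 H2 He).
  assert (V : vscale (dot3 A A) B = vadd (cross3 (cross3 A B) A) (vscale (dot3 A B) A))
    by (destruct_nil3; apply nil3_eq; unfold_nil3; ring).
  rewrite H2 in V.
  assert (He' : dot3 A A <> 0) by lra.
  revert V He'. generalize (dot3 A A). intros e V He'.
  assert (W : B = vscale (/ e) (vscale e B)) by (destruct_nil3; apply nil3_eq; unfold_nil3; field; auto).
  rewrite W at 1. rewrite V. clear W V. destruct_nil3; apply nil3_eq; unfold_nil3; field; auto.
Qed.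

Lemma tangent_of_normal_fiber_rot th N NX NY :
  tangent_of_normal (fiber_rot th N) (fiber_rot th NX) (fiber_rot th NY) =
  fiber_rot th (tangent_of_normal N NX NY).
Proof.
  unfold tangent_of_normal. rewrite fiber_rot_cross3.
  change (n3 (fiber_rot th N)) with (n3 N).
  generalize (- / (n3 N * n3 N)) (cross3 N NX). intros k u.
  destruct_nil3; apply nil3_eq; unfold_nil3; ring.
Qed.

Lemma stereo_fiber_rot th n : stereo (fiber_rot th n) = Cmult (eitheta th) (stereo n).
Proof.
  destruct_nil3; unfold stereo, eitheta, Cmult; unfold_nil3. f_equal; unfold Rdiv; ring.
Qed.

Definition stereo_inv (w : C) : Nil3 :=
  let s := 1 + fst w * fst w + snd w * snd w in (2 * fst w / s, 2 * snd w / s, (2 - s) / s).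

Lemma stereo_inv_stereo n : dot3 n n = 1 -> 0 < n3 n -> stereo_inv (stereo n) = n.
Proof.
  destruct n as [[x1 x2] x3]. unfold stereo, stereo_inv, dot3, n1, n2, n3; cbn [fst snd].
  intros Hn Hx3.
  assert (S : 1 + x1 / (1 + x3) * (x1 / (1 + x3)) + x2 / (1 + x3) * (x2 / (1 + x3)) = 2 / (1 + x3)).
  { replace (1 + x1 / (1 + x3) * (x1 / (1 + x3)) + x2 / (1 + x3) * (x2 / (1 + x3)))
      with (1 + (x1 * x1 + x2 * x2) / ((1 + x3) * (1 + x3))) by (field; lra).
    replace (x1 * x1 + x2 * x2) with ((1 - x3) * (1 + x3)) by lra. field; lra. }
  rewrite S. f_equal; [f_equal|]; field; lra.
Qed.

Lemma stereo_inj n m : dot3 n n = 1 -> dot3 m m = 1 -> 0 < n3 n -> 0 < n3 m ->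
  stereo n = stereo m -> n = m.
Proof.
  intros Hn Hm Pn Pm E. rewrite <- (stereo_inv_stereo n), <- (stereo_inv_stereo m), E; auto.
Qed.

Lemma tangent_of_normal_vcomb m X Y a b : n3 m <> 0 ->
  tangent_of_normal m (vcomb a b X Y) (vcomb (- b) a X Y) =
  vadd (vcomb a b (tangent_of_normal m X Y) (cross3 m (tangent_of_normal m X Y)))
       (vscale (- b / (n3 m * n3 m)) (vcomb (dot3 m m - 1) (- dot3 m X) X m)).
Proof.
  unfold tangent_of_normal. destruct_nil3; intro H; apply nil3_eq; unfold_nil3; field; auto.
Qed.

Lemma fiber_rot_tangent_of_normal th N NXi NYi m NXj NYj a b :
  m = fiber_rot th N -> dot3 m m = 1 -> dot3 m NXj = 0 -> n3 m <> 0 ->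
  fiber_rot th NXi = vcomb a b NXj NYj ->
  fiber_rot th NYi = vcomb (- b) a NXj NYj ->
  fiber_rot th (tangent_of_normal N NXi NYi) =
  vcomb a b (tangent_of_normal m NXj NYj) (cross3 m (tangent_of_normal m NXj NYj)).
Proof.
  intros Hm H1 H2 H3 HX HY.
  rewrite <- tangent_of_normal_fiber_rot, <- Hm, HX, HY, tangent_of_normal_vcomb, H1, H2 by auto.
  generalize (vcomb a b (tangent_of_normal m NXj NYj) (cross3 m (tangent_of_normal m NXj NYj))).
  intro u. destruct_nil3; apply nil3_eq; unfold_nil3; ring.
Qed.

Lemma cross3_unit_vcomb m U V a b : dot3 m m = 1 -> dot3 m U = 0 -> V = cross3 m U ->
  cross3 m (vcomb a b U V) = vcomb (- b) a U V.
Proof.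
  intros H1 H2 ->. revert H1 H2. destruct_nil3; unfold_nil3. intros H1 H2.
  apply nil3_eq; cbn [fst snd n1 n2 n3]; nsatz.
Qed.

Lemma cross3_vcomb_rotation a b U V :
  cross3 (vcomb a b U V) (vcomb (- b) a U V) = vscale (a * a + b * b) (cross3 U V).
Proof. destruct_nil3; apply nil3_eq; unfold_nil3; ring. Qed.

Lemma dot3_vcomb_conformal a b U V : dot3 U U = dot3 V V -> dot3 U V = 0 ->
  dot3 (vcomb a b U V) (vcomb a b U V) = (a * a + b * b) * dot3 U U.
Proof.
  intros H1 H2. transitivity (a * a * dot3 U U + b * b * dot3 V V + 2 * a * b * dot3 U V).
  - destruct_nil3; unfold_nil3; ring.
  - rewrite <- H1, H2. ring.
Qed.

(** * Calculus in the plane *)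

Lemma is_derive_of_local_bound (f : R -> R) x l :
  (forall eps : posreal, locally x (fun t => Rabs (f t - f x - (t - x) * l) <= eps * Rabs (t - x))) ->
  is_derive f x l.
Proof.
  intros H. split; [apply is_linear_scal_l |]. intros x' Hx'.
  apply (@is_filter_lim_locally_unique R_AbsRing R_NormedModule) in Hx'. subst x'.
  intro eps. exact (H eps).
Qed.

Lemma im_le_Cmod (c : C) : Rabs (Im c) <= Cmod c.
Proof.
  destruct c as [a b]. unfold Cmod, Im; simpl. rewrite <- sqrt_Rsqr_abs.
  apply sqrt_le_1_alt. unfold Rsqr. nra.
Qed.

Lemma C_is_derive_partials (h : C -> C) z l : is_derive (K := C_AbsRing) h z l ->
  is_derive (fun t => fst (h (t, snd z))) (fst z) (fst l) /\
  is_derive (fun t => snd (h (t, snd z))) (fst z) (snd l) /\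
  is_derive (fun t => fst (h (fst z, t))) (snd z) (- snd l) /\
  is_derive (fun t => snd (h (fst z, t))) (snd z) (fst l).
Proof.
  intros [_ H]. destruct z as [z1 z2], l as [l1 l2]. simpl.
  assert (K : forall eps : posreal, locally_2d (fun u v =>
     Cmod (Cminus (Cminus (h (u, v)) (h (z1, z2))) (Cmult (Cminus (u, v) (z1, z2)) (l1, l2)))
       <= eps * Cmod (Cminus (u, v) (z1, z2))) z1 z2).
  { intro eps. destruct (H (z1, z2) (fun P HP => HP) eps) as [d Hd].
    assert (Hd2 : 0 < d / 2) by (generalize (cond_pos d); lra).
    exists (mkposreal _ Hd2). intros u v Hu Hv. apply Hd. simpl in Hu, Hv.
    change (Cmod (Cminus (u, v) (z1, z2)) < d).
    eapply Rle_lt_trans; [apply Cmod_2Rmax |]. simpl.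
    assert (Hs : sqrt 2 < 2).
    { rewrite <- (sqrt_square 2) at 2 by lra. apply sqrt_lt_1; lra. }
    assert (Hm : Rmax (Rabs (u + - z1)) (Rabs (v + - z2)) < d / 2) by (apply Rmax_lub_lt; assumption).
    assert (0 <= Rmax (Rabs (u + - z1)) (Rabs (v + - z2)))
      by (eapply Rle_trans; [apply Rabs_pos | apply Rmax_l]).
    assert (0 <= sqrt 2) by apply sqrt_pos. nra. }
  assert (E1 : forall t, Cmod (Cminus (t, z2) (z1, z2)) = Rabs (t - z1)).
  { intro t. unfold Cminus, Cplus, Copp; simpl. replace (z2 + - z2) with 0 by ring. apply Cmod_R. }
  assert (E2 : forall t, Cmod (Cminus (z1, t) (z1, z2)) = Rabs (t - z2)).
  { intro t. unfold Cminus, Cplus, Copp; simpl. replace (z1 + - z1) with 0 by ring.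
    unfold Cmod; simpl. rewrite <- sqrt_Rsqr_abs. f_equal. unfold Rsqr. ring. }
  split; [|split; [|split]]; apply is_derive_of_local_bound; intro eps;
  (eapply filter_imp; [| first [apply (locally_2d_1d_const_y _ _ _ (K eps))
                              | apply (locally_2d_1d_const_x _ _ _ (K eps))]]);
  intros t Ht; simpl in Ht; rewrite ?E1, ?E2 in Ht; (eapply Rle_trans; [|exact Ht]);
  first [ eapply Rle_trans; [|apply re_le_Cmod]; right; f_equal;
            unfold Re, Cminus, Cplus, Copp, Cmult; simpl; ring
          | eapply Rle_trans; [|apply im_le_Cmod]; right; f_equal;
            unfold Im, Cminus, Cplus, Copp, Cmult; simpl; ring ].
Qed.

Lemma continuity_2d_pt_of_continuous (u : C -> R) (z : C) :
  continuous u z -> continuity_2d_pt (fun a b => u (a, b)) (fst z) (snd z).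
Proof.
  intros H. destruct z as [x y]. apply continuity_2d_pt_filterlim.
  eapply filterlim_ext; [| exact H]. intros [a b]; reflexivity.
Qed.

Lemma locally_2d_of_open (D : C -> Prop) z : open D -> D z ->
  locally_2d (fun a b => D (a, b)) (fst z) (snd z).
Proof.
  intros HO Hz. destruct z as [x y]. apply locally_2d_locally.
  generalize (HO _ Hz). apply filter_imp. intros [a b]; auto.
Qed.

Lemma open_locally_x (O : C -> Prop) x y : open O -> O (x, y) -> locally x (fun t => O (t, y)).
Proof.
  intros HO Hz. apply (locally_2d_1d_const_y (fun a b => O (a, b))).
  exact (locally_2d_of_open O (x, y) HO Hz).
Qed.

Lemma open_locally_y (O : C -> Prop) x y : open O -> O (x, y) -> locally y (fun t => O (x, t)).
Proof.
  intros HO Hz. apply (locally_2d_1d_const_x (fun a b => O (a, b))).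
  exact (locally_2d_of_open O (x, y) HO Hz).
Qed.

Section Smooth.
Variables (D : C -> Prop) (u : C -> R).
Hypotheses (HD : open D) (Hu : smooth_on D u).

Lemma smooth_on_ex_diff_n n l z : D z -> ex_diff_n (fun a b => pder l u (a, b)) n (fst z) (snd z).
Proof.
  revert l z. induction n as [|n IH]; intros l z Hz; destruct (Hu l z Hz) as (H1 & H2 & H3);
    simpl; (split; [apply continuity_2d_pt_of_continuous; exact H3 |]).
  - exact I.
  - destruct z. repeat split; auto; [exact (IH (Px :: l) _ Hz) | exact (IH (Py :: l) _ Hz)].
Qed.

Lemma smooth_on_differentiable_pt_lim l z : D z ->
  differentiable_pt_lim (fun a b => pder l u (a, b)) (fst z) (snd z)
    (pder (Px :: l) u z) (pder (Py :: l) u z).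
Proof.
  intros Hz.
  assert (HL : locally_2d (fun a b => ex_diff_n (fun a b => pder l u (a, b)) 2 a b) (fst z) (snd z)).
  { generalize (locally_2d_of_open D z HD Hz). apply locally_2d_impl. apply locally_2d_forall.
    intros a b Hab. exact (smooth_on_ex_diff_n 2 l (a, b) Hab). }
  destruct (Taylor_Lagrange_2d _ 1 _ _ HL) as [K [d1 Hd1]].
  unfold DL_pol, differential in Hd1. simpl in Hd1.
  assert (C00 : Binomial.C 0 0 = 1) by (unfold Binomial.C; simpl; field).
  assert (C10 : Binomial.C 1 0 = 1) by (unfold Binomial.C; simpl; field).
  assert (C11 : Binomial.C 1 1 = 1) by (unfold Binomial.C; simpl; field).
  rewrite C00, C10, C11 in Hd1.
  change (partial_derive 0 0 (fun a b => pder l u (a, b)) (fst z) (snd z)) with (pder l u (fst z, snd z)) in Hd1.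
  change (partial_derive 1 0 (fun a b => pder l u (a, b)) (fst z) (snd z)) with (pder (Px :: l) u z) in Hd1.
  change (partial_derive 0 1 (fun a b => pder l u (a, b)) (fst z) (snd z)) with (pder (Py :: l) u z) in Hd1.
  intros eps.
  assert (Hk : 0 < eps / (Rabs K + 1))
    by (apply Rdiv_lt_0_compat; [apply cond_pos | generalize (Rabs_pos K); lra]).
  exists (mkposreal _ (Rmin_stable_in_posreal d1 (mkposreal _ Hk))).
  intros a b Ha Hb. simpl in Ha, Hb.
  specialize (Hd1 a b (Rlt_le_trans _ _ _ Ha (Rmin_l _ _)) (Rlt_le_trans _ _ _ Hb (Rmin_l _ _))).
  simpl in Hd1.
  set (M := Rmax (Rabs (a - fst z)) (Rabs (b - snd z))) in *.
  assert (HM0 : 0 <= M) by (eapply Rle_trans; [apply Rabs_pos | apply Rmax_l]).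
  assert (HM : M < eps / (Rabs K + 1))
    by (apply Rmax_lub_lt; eapply Rlt_le_trans; eauto; apply Rmin_r).
  assert (HM' : M * (Rabs K + 1) <= eps).
  { apply Rmult_lt_compat_r with (r := Rabs K + 1) in HM; [|generalize (Rabs_pos K); lra].
    unfold Rdiv in HM. rewrite Rmult_assoc, Rinv_l in HM by (generalize (Rabs_pos K); lra). lra. }
  destruct z as [x y]; simpl in *.
  match goal with |- Rabs ?e <= _ => match type of Hd1 with Rabs ?e' <= _ =>
    replace e with e' by field end end.
  eapply Rle_trans; [exact Hd1 |].
  assert (K * M * M <= Rabs K * M * M).
  { apply Rmult_le_compat_r; [exact HM0 |]. apply Rmult_le_compat_r; [exact HM0 | apply Rle_abs]. }
  generalize (Rabs_pos K). nra.
Qed.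

Lemma smooth_on_schwarz l z : D z -> pder (Px :: Py :: l) u z = pder (Py :: Px :: l) u z.
Proof.
  intros Hz. destruct z as [x y]. apply (Schwarz (fun a b => pder l u (a, b)) x y).
  - generalize (locally_2d_of_open D (x, y) HD Hz). apply locally_2d_impl. apply locally_2d_forall.
    intros a b Hab.
    destruct (Hu l (a, b) Hab) as (E1 & E2 & _).
    destruct (Hu (Py :: l) (a, b) Hab) as (F1 & _ & _).
    destruct (Hu (Px :: l) (a, b) Hab) as (_ & G2 & _).
    repeat split; assumption.
  - apply (continuity_2d_pt_of_continuous (pder (Px :: Py :: l) u) (x, y)). apply (Hu _ _ Hz).
  - apply (continuity_2d_pt_of_continuous (pder (Py :: Px :: l) u) (x, y)). apply (Hu _ _ Hz).
Qed.

End Smooth.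

Lemma is_derive_zero_const (F : R -> R) a b :
  (forall t, Rmin a b <= t <= Rmax a b -> is_derive F t 0) -> F b = F a.
Proof.
  intros H. destruct (MVT_gen F a b (fun _ => 0)) as (c & _ & E).
  - intros t Ht. apply H. lra.
  - intros t Ht. apply continuity_pt_filterlim.
    apply (ex_derive_continuous (K := R_AbsRing) (V := R_NormedModule) F t). exists 0. apply H, Ht.
  - rewrite Rmult_0_l in E. lra.
Qed.

Lemma Rabs_between_le c e t : Rmin c e <= t <= Rmax c e -> Rabs (t - c) <= Rabs (e - c).
Proof. unfold Rmin, Rmax, Rabs. repeat destruct Rle_dec; repeat destruct Rcase_abs; lra. Qed.

Lemma locally_2d_const_of_partials_zero (G : C -> R) (O : C -> Prop) z0 : open O -> O z0 ->
  (forall x y, O (x, y) -> is_derive (fun t => G (t, y)) x 0 /\ is_derive (fun t => G (x, t)) y 0) ->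
  locally_2d (fun a b => G (a, b) = G z0) (fst z0) (snd z0).
Proof.
  intros HO Oz HG. destruct (locally_2d_of_open O z0 HO Oz) as [d Hd].
  destruct z0 as [x0 y0]; simpl in *. exists d. intros a b Ha Hb.
  transitivity (G (a, y0)).
  - apply (is_derive_zero_const (fun t => G (a, t))). intros t Ht.
    apply (HG a t), Hd; [exact Ha | eapply Rle_lt_trans; [apply Rabs_between_le, Ht | exact Hb]].
  - apply (is_derive_zero_const (fun t => G (t, y0))). intros t Ht.
    apply (HG t y0), Hd; [eapply Rle_lt_trans; [apply Rabs_between_le, Ht | exact Ha] |].
    rewrite Rminus_diag, Rabs_R0. apply cond_pos.
Qed.

Lemma is_derive_zero_of_locally_zero (g : R -> R) t0 l : locally t0 (fun t => g t = 0) ->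
  is_derive g t0 l -> l = 0.
Proof.
  intros Hg Hd. rewrite <- (is_derive_unique _ _ _ Hd). apply is_derive_unique.
  apply (is_derive_ext_loc (fun _ => 0)); [apply filter_imp with (2 := Hg); auto |].
  apply (is_derive_const (K := R_AbsRing) (V := R_NormedModule) 0).
Qed.

Lemma locally_2d_const3_of_partials_zero (G : C -> Nil3) (O : C -> Prop) z0 : open O -> O z0 ->
  (forall x y, O (x, y) ->
     is_derive3 (fun t => G (t, y)) x (0, 0, 0) /\ is_derive3 (fun t => G (x, t)) y (0, 0, 0)) ->
  locally_2d (fun a b => G (a, b) = G z0) (fst z0) (snd z0).
Proof.
  intros HO Oz HG.
  assert (E1 := locally_2d_const_of_partials_zero (fun w => n1 (G w)) O z0 HO Oz
    (fun x y Oxy => conj (proj1 (proj1 (HG x y Oxy))) (proj1 (proj2 (HG x y Oxy))))).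
  assert (E2 := locally_2d_const_of_partials_zero (fun w => n2 (G w)) O z0 HO Oz
    (fun x y Oxy => conj (proj1 (proj2 (proj1 (HG x y Oxy)))) (proj1 (proj2 (proj2 (HG x y Oxy)))))).
  assert (E3 := locally_2d_const_of_partials_zero (fun w => n3 (G w)) O z0 HO Oz
    (fun x y Oxy => conj (proj2 (proj2 (proj1 (HG x y Oxy)))) (proj2 (proj2 (proj2 (HG x y Oxy)))))).
  generalize (locally_2d_and _ _ _ _ E1 (locally_2d_and _ _ _ _ E2 E3)).
  apply locally_2d_impl, locally_2d_forall. intros a b (H1 & H2 & H3). apply nil3_eq; assumption.
Qed.

(** * Immersions read in a chart *)

Section Chart.
Variables (X : Type) (A : atlas X) (f : X -> Nil3).
Hypotheses (Hopen : forall i, open (cdom A i)) (Hsmooth : smooth_map A f).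

Definition jet (l : list pdir) (i : chart A) (w : C) : Nil3 :=
  (pder l (floc A f i 0) w, pder l (floc A f i 1) w, pder l (floc A f i 2) w).

Definition curve_velocity (i : chart A) (phi : R -> C) (t0 a b : R) : Prop :=
  forall k l, is_derive (fun t => pder l (floc A f i k) (phi t)) t0
    (a * pder (Px :: l) (floc A f i k) (phi t0) + b * pder (Py :: l) (floc A f i k) (phi t0)).

Lemma curve_velocity_pair i (g1 g2 : R -> R) t0 a b :
  is_derive g1 t0 a -> is_derive g2 t0 b -> cdom A i (g1 t0, g2 t0) ->
  curve_velocity i (fun t => (g1 t, g2 t)) t0 a b.
Proof.
  intros H1 H2 Hw k l.
  assert (D := smooth_on_differentiable_pt_lim _ _ (Hopen i) (Hsmooth i k) l _ Hw).
  apply is_derive_Reals in H1, H2.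
  assert (E := derivable_pt_lim_comp_2d _ _ _ _ _ _ _ _ D H1 H2).
  apply is_derive_Reals in E. replace (_ + _) with (a * pder (Px :: l) (floc A f i k) (g1 t0, g2 t0)
    + b * pder (Py :: l) (floc A f i k) (g1 t0, g2 t0)) in E by ring. exact E.
Qed.

Lemma curve_velocity_x i z : cdom A i z -> curve_velocity i (fun t => (t, snd z)) (fst z) 1 0.
Proof.
  intros Hz. apply curve_velocity_pair; [apply (is_derive_id (K := R_AbsRing)) |
    apply (is_derive_const (K := R_AbsRing) (V := R_NormedModule)) | now destruct z].
Qed.

Lemma curve_velocity_y i z : cdom A i z -> curve_velocity i (fun t => (fst z, t)) (snd z) 0 1.
Proof.
  intros Hz. apply curve_velocity_pair; [apply (is_derive_const (K := R_AbsRing) (V := R_NormedModule)) |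
    apply (is_derive_id (K := R_AbsRing)) | now destruct z].
Qed.

Lemma curve_velocity_holo_x j (h : C -> C) z a b :
  is_derive (K := C_AbsRing) h z (a, b) -> cdom A j (h z) ->
  curve_velocity j (fun t => h (t, snd z)) (fst z) a b.
Proof.
  intros H Hw. destruct (C_is_derive_partials h z (a, b) H) as (H1 & H2 & _ & _).
  replace (fun t => h (t, snd z)) with (fun t => (fst (h (t, snd z)), snd (h (t, snd z))))
    by (apply functional_extensionality; intro; symmetry; apply surjective_pairing).
  apply curve_velocity_pair; auto. destruct z. now rewrite <- surjective_pairing.
Qed.

Lemma curve_velocity_holo_y j (h : C -> C) z a b :
  is_derive (K := C_AbsRing) h z (a, b) -> cdom A j (h z) ->
  curve_velocity j (fun t => h (fst z, t)) (snd z) (- b) a.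
Proof.
  intros H Hw. destruct (C_is_derive_partials h z (a, b) H) as (_ & _ & H1 & H2).
  replace (fun t => h (fst z, t)) with (fun t => (fst (h (fst z, t)), snd (h (fst z, t))))
    by (apply functional_extensionality; intro; symmetry; apply surjective_pairing).
  apply curve_velocity_pair; auto. destruct z. now rewrite <- surjective_pairing.
Qed.

Lemma is_derive3_jet i phi t0 a b l : curve_velocity i phi t0 a b ->
  is_derive3 (fun t => jet l i (phi t)) t0 (vcomb a b (jet (Px :: l) i (phi t0)) (jet (Py :: l) i (phi t0))).
Proof. intros H. split; [|split]; apply H. Qed.

Lemma is_derive3_f_curve i phi t0 a b : curve_velocity i phi t0 a b ->
  is_derive3 (fun t => f (cpar A i (phi t))) t0 (vcomb a b (Fx A f i (phi t0)) (Fy A f i (phi t0))).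
Proof. exact (is_derive3_jet i phi t0 a b nil). Qed.

Definition Lx_x i w := left_comp_d (jet nil i w) (jet (Px :: nil) i w) (jet (Px :: nil) i w) (jet (Px :: Px :: nil) i w).
Definition Lx_y i w := left_comp_d (jet nil i w) (jet (Px :: nil) i w) (jet (Py :: nil) i w) (jet (Py :: Px :: nil) i w).
Definition Ly_x i w := left_comp_d (jet nil i w) (jet (Py :: nil) i w) (jet (Px :: nil) i w) (jet (Px :: Py :: nil) i w).
Definition Ly_y i w := left_comp_d (jet nil i w) (jet (Py :: nil) i w) (jet (Py :: nil) i w) (jet (Py :: Py :: nil) i w).

Lemma is_derive3_Lx_curve i phi t0 a b : curve_velocity i phi t0 a b ->
  is_derive3 (fun t => Lx A f i (phi t)) t0 (vcomb a b (Lx_x i (phi t0)) (Lx_y i (phi t0))).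
Proof.
  intros H. assert (D := is_derive3_left_comp _ _ _ _ _ (is_derive3_jet _ _ _ _ _ nil H)
    (is_derive3_jet _ _ _ _ _ (Px :: nil) H)).
  replace (vcomb _ _ _ _) with (left_comp_d (jet nil i (phi t0)) (jet (Px :: nil) i (phi t0))
    (vcomb a b (jet (Px :: nil) i (phi t0)) (jet (Py :: nil) i (phi t0)))
    (vcomb a b (jet (Px :: Px :: nil) i (phi t0)) (jet (Py :: Px :: nil) i (phi t0)))).
  - exact D.
  - unfold Lx_x, Lx_y, left_comp_d. apply nil3_eq; unfold_nil3; ring.
Qed.

Lemma is_derive3_Ly_curve i phi t0 a b : curve_velocity i phi t0 a b ->
  is_derive3 (fun t => Ly A f i (phi t)) t0 (vcomb a b (Ly_x i (phi t0)) (Ly_y i (phi t0))).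
Proof.
  intros H. assert (D := is_derive3_left_comp _ _ _ _ _ (is_derive3_jet _ _ _ _ _ nil H)
    (is_derive3_jet _ _ _ _ _ (Py :: nil) H)).
  replace (vcomb _ _ _ _) with (left_comp_d (jet nil i (phi t0)) (jet (Py :: nil) i (phi t0))
    (vcomb a b (jet (Px :: nil) i (phi t0)) (jet (Py :: nil) i (phi t0)))
    (vcomb a b (jet (Px :: Py :: nil) i (phi t0)) (jet (Py :: Py :: nil) i (phi t0)))).
  - exact D.
  - unfold Ly_x, Ly_y, left_comp_d. apply nil3_eq; unfold_nil3; ring.
Qed.

Definition N_x i w := normalize_d (cross3 (Lx A f i w) (Ly A f i w))
  (cross3_d (Lx A f i w) (Ly A f i w) (Lx_x i w) (Ly_x i w)).
Definition N_y i w := normalize_d (cross3 (Lx A f i w) (Ly A f i w))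
  (cross3_d (Lx A f i w) (Ly A f i w) (Lx_y i w) (Ly_y i w)).

Lemma is_derive3_unit_normal_curve i phi t0 a b : curve_velocity i phi t0 a b ->
  0 < dot3 (cross3 (Lx A f i (phi t0)) (Ly A f i (phi t0))) (cross3 (Lx A f i (phi t0)) (Ly A f i (phi t0))) ->
  is_derive3 (fun t => unit_normal A f i (phi t)) t0 (vcomb a b (N_x i (phi t0)) (N_y i (phi t0))).
Proof.
  intros H Hpos. assert (D := is_derive3_normalize _ _ _
    (is_derive3_cross3 _ _ _ _ _ (is_derive3_Lx_curve _ _ _ _ _ H) (is_derive3_Ly_curve _ _ _ _ _ H)) Hpos).
  rewrite cross3_d_vcomb, normalize_d_vcomb in D. exact D.
Qed.

Lemma is_derive3_Lx_x i z : cdom A i z -> is_derive3 (fun t => Lx A f i (t, snd z)) (fst z) (Lx_x i z).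
Proof. intros Hz. rewrite <- (vcomb_1_0 _ (Lx_y i z)). destruct z. exact (is_derive3_Lx_curve _ _ _ _ _ (curve_velocity_x i _ Hz)). Qed.

Lemma is_derive3_Lx_y i z : cdom A i z -> is_derive3 (fun t => Lx A f i (fst z, t)) (snd z) (Lx_y i z).
Proof. intros Hz. rewrite <- (vcomb_0_1 (Lx_x i z)). destruct z. exact (is_derive3_Lx_curve _ _ _ _ _ (curve_velocity_y i _ Hz)). Qed.

Lemma is_derive3_Ly_y i z : cdom A i z -> is_derive3 (fun t => Ly A f i (fst z, t)) (snd z) (Ly_y i z).
Proof. intros Hz. rewrite <- (vcomb_0_1 (Ly_x i z)). destruct z. exact (is_derive3_Ly_curve _ _ _ _ _ (curve_velocity_y i _ Hz)). Qed.

Lemma is_derive3_f_x i z : cdom A i z -> is_derive3 (fun t => f (cpar A i (t, snd z))) (fst z) (Fx A f i z).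
Proof. intros Hz. rewrite <- (vcomb_1_0 _ (Fy A f i z)). destruct z. exact (is_derive3_f_curve _ _ _ _ _ (curve_velocity_x i _ Hz)). Qed.

Lemma is_derive3_f_y i z : cdom A i z -> is_derive3 (fun t => f (cpar A i (fst z, t))) (snd z) (Fy A f i z).
Proof. intros Hz. rewrite <- (vcomb_0_1 (Fx A f i z)). destruct z. exact (is_derive3_f_curve _ _ _ _ _ (curve_velocity_y i _ Hz)). Qed.

Lemma jet_schwarz i z : cdom A i z -> jet (Px :: Py :: nil) i z = jet (Py :: Px :: nil) i z.
Proof.
  intros Hz. unfold jet.
  rewrite !(smooth_on_schwarz _ _ (Hopen i) (Hsmooth i _) nil z Hz). reflexivity.
Qed.

(* Maurer-Cartan equation [d_x (f^-1 f_y) - d_y (f^-1 f_x) + [f^-1 f_x, f^-1 f_y] = 0],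
   where [[u, v] = n3 (cross3 u v) e3] in nil3. *)
Lemma Ly_x_Lx_y i z : cdom A i z ->
  Ly_x i z = (n1 (Lx_y i z), n2 (Lx_y i z), n3 (Lx_y i z) - n3 (cross3 (Lx A f i z) (Ly A f i z))).
Proof.
  intros Hz. unfold Ly_x. rewrite (jet_schwarz i z Hz). unfold Lx_y, left_comp_d, Lx, Ly, Fx, Fy.
  apply nil3_eq; unfold jet, floc; cbn [pder]; unfold_nil3; field.
Qed.

Lemma tension_eq i z : cdom A i z ->
  tension A f i z = vadd (vadd (Lx_x i z) (Ly_y i z)) (vadd (nabla_sym (Lx A f i z)) (nabla_sym (Ly A f i z))).
Proof.
  intros Hz. destruct (is_derive3_Lx_x i z Hz) as (X1 & X2 & X3), (is_derive3_Ly_y i z Hz) as (Y1 & Y2 & Y3).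
  unfold tension, dx, dy; cbv beta zeta iota.
  rewrite_known_derives.
  apply nil3_eq; unfold_nil3; ring.
Qed.

Hypotheses (Hconf : conformal_immersion A f) (Hmin : minimal A f) (Hnv : nowhere_vertical A f).

Lemma conformal_at i z : cdom A i z ->
  dot3 (Lx A f i z) (Lx A f i z) = dot3 (Ly A f i z) (Ly A f i z) /\
  0 < dot3 (Lx A f i z) (Lx A f i z) /\ dot3 (Lx A f i z) (Ly A f i z) = 0.
Proof. exact (proj2 Hconf i z). Qed.

Lemma dot3_cross3_Lx_Ly_pos i z : cdom A i z ->
  0 < dot3 (cross3 (Lx A f i z) (Ly A f i z)) (cross3 (Lx A f i z) (Ly A f i z)).
Proof.
  intros Hz. destruct (conformal_at i z Hz) as (H1 & H2 & H3).
  rewrite dot3_cross3, H3, <- H1. nra.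
Qed.

Lemma is_derive3_unit_normal_x i z : cdom A i z ->
  is_derive3 (fun t => unit_normal A f i (t, snd z)) (fst z) (N_x i z).
Proof.
  intros Hz. rewrite <- (vcomb_1_0 _ (N_y i z)). destruct z.
  exact (is_derive3_unit_normal_curve _ _ _ _ _ (curve_velocity_x i _ Hz) (dot3_cross3_Lx_Ly_pos i _ Hz)).
Qed.

Lemma is_derive3_unit_normal_y i z : cdom A i z ->
  is_derive3 (fun t => unit_normal A f i (fst z, t)) (snd z) (N_y i z).
Proof.
  intros Hz. rewrite <- (vcomb_0_1 (N_x i z)). destruct z.
  exact (is_derive3_unit_normal_curve _ _ _ _ _ (curve_velocity_y i _ Hz) (dot3_cross3_Lx_Ly_pos i _ Hz)).
Qed.

Lemma conformal_derive_y i z : cdom A i z -> dot3 (Lx A f i z) (Lx_y i z) = dot3 (Ly A f i z) (Ly_y i z).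
Proof.
  intros Hz.
  assert (D := is_derive_minus _ _ _ _ _ (is_derive_dot3 _ _ _ _ _ (is_derive3_Lx_y i z Hz) (is_derive3_Lx_y i z Hz))
    (is_derive_dot3 _ _ _ _ _ (is_derive3_Ly_y i z Hz) (is_derive3_Ly_y i z Hz))).
  destruct z as [x y]. apply is_derive_zero_of_locally_zero in D.
  - change (minus ?a ?b = 0) with (a - b = 0) in D. cbn [fst snd] in D. unfold dot3 in D |- *. lra.
  - apply filter_imp with (2 := open_locally_y _ x y (Hopen i) Hz).
    intros t Ht. apply Rminus_diag_eq, (conformal_at i _ Ht).
Qed.

Lemma Lx_tangent_of_normal i z : cdom A i z ->
  Lx A f i z = tangent_of_normal (unit_normal A f i z) (N_x i z) (N_y i z).
Proof.
  intros Hz. destruct (conformal_at i z Hz) as (H1 & H2 & H3).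
  apply tangent_of_normal_spec; auto.
  - apply conformal_derive_y, Hz.
  - apply Ly_x_Lx_y, Hz.
  - apply (dot3_normalize_eq0 _ _ (dot3_cross3_Lx_Ly_pos i z Hz)).
    rewrite <- tension_eq by exact Hz. apply Hmin, Hz.
  - apply n3_normalize_neq0, Hnv, Hz.
Qed.

End Chart.

(** * Equivariance *)

Section Main.
Variables (X : Type) (A : atlas X) (f : X -> Nil3) (g : X -> C) (gam : X -> X).
Hypotheses (Hrs : riemann_surface A) (Hconf : conformal_immersion A f) (Hmin : minimal A f)
  (Hnv : nowhere_vertical A f) (Hup : upward_normal A f) (Hg : is_normal_gauss_map A f g)
  (Haut : automorphism A gam).

Let Hopen : forall i, open (cdom A i) := proj1 Hrs.
Let Hsmooth : smooth_map A f := proj1 Hconf.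
Let Lx_tangent := Lx_tangent_of_normal X A f Hopen Hsmooth Hconf Hmin Hnv.

Lemma gam_chart_transition i z0 : cdom A i z0 -> exists j (h : C -> C) (O : C -> Prop),
  open O /\ O z0 /\ forall z, O z ->
    cdom A i z /\ cdom A j (h z) /\ cpar A j (h z) = gam (cpar A i z) /\ C_holo_at h z.
Proof.
  intros Hz. pose proof Hrs as (_ & _ & Hcov & Htr & _ & _).
  destruct (Hcov (gam (cpar A i z0))) as (j & w0 & Hw0 & Ew0).
  pose proof Haut as (_ & _ & _ & (Hcont & Hhol) & _).
  destruct (Hhol i j) as (h & Hh).
  exists j, h, (fun z => cdom A i z /\ exists w, cdom A j w /\ cpar A j w = gam (cpar A i z)).
  split; [|split].
  - apply (Hcont (fun p => exists w, cdom A j w /\ cpar A j w = p)). intro i'. exact (proj1 (Htr i' j)).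
  - split; [exact Hz | exists w0; auto].
  - intros z (Hzi & Hex). destruct (Hh z Hzi Hex) as (H1 & H2 & H3). auto.
Qed.

Lemma unit_normal_unit_upper i z : cdom A i z ->
  dot3 (unit_normal A f i z) (unit_normal A f i z) = 1 /\ 0 < n3 (unit_normal A f i z).
Proof.
  intros Hz. split; [| apply Hup, Hz].
  apply dot3_normalize, (dot3_cross3_Lx_Ly_pos _ _ _ Hconf), Hz.
Qed.

(* [f (gam x) = iso_act p th (f x)] for all [x] exactly when [iso_defect th] is constantly [p]. *)
Definition iso_defect (th : R) (x : X) : Nil3 := nil_mul (f (gam x)) (nil_inv (fiber_rot th (f x))).

Section Transition.
Variables (i j : chart A) (h : C -> C) (O : C -> Prop).
Hypotheses (HO : open O) (Htrans : forall z, O z ->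
  cdom A i z /\ cdom A j (h z) /\ cpar A j (h z) = gam (cpar A i z) /\ C_holo_at h z).

Lemma is_derive3_f_gam x y a b : O (x, y) -> is_derive (K := C_AbsRing) h (x, y) (a, b) ->
  is_derive3 (fun t => f (gam (cpar A i (t, y)))) x
    (vcomb a b (Fx A f j (h (x, y))) (Fy A f j (h (x, y)))) /\
  is_derive3 (fun t => f (gam (cpar A i (x, t)))) y
    (vcomb (- b) a (Fx A f j (h (x, y))) (Fy A f j (h (x, y)))).
Proof.
  intros Oz Hd. destruct (Htrans _ Oz) as (_ & Hw & _). split.
  - apply (is_derive3_ext_loc (fun t => f (cpar A j (h (t, y))))).
    + apply filter_imp with (2 := open_locally_x O x y HO Oz). intros t Ot. f_equal. apply Htrans, Ot.
    + exact (is_derive3_f_curve _ _ _ _ _ _ _ _ (curve_velocity_holo_x _ _ _ Hopen Hsmooth j h (x, y) a b Hd Hw)).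
  - apply (is_derive3_ext_loc (fun t => f (cpar A j (h (x, t))))).
    + apply filter_imp with (2 := open_locally_y O x y HO Oz). intros t Ot. f_equal. apply Htrans, Ot.
    + exact (is_derive3_f_curve _ _ _ _ _ _ _ _ (curve_velocity_holo_y _ _ _ Hopen Hsmooth j h (x, y) a b Hd Hw)).
Qed.

Definition frame_rotated (th x y a b : R) : Prop :=
  fiber_rot th (Lx A f i (x, y)) = vcomb a b (Lx A f j (h (x, y))) (Ly A f j (h (x, y))) /\
  fiber_rot th (Ly A f i (x, y)) = vcomb (- b) a (Lx A f j (h (x, y))) (Ly A f j (h (x, y))).

Lemma frame_rotated_of_iso p th x y a b : (forall x, f (gam x) = iso_act p th (f x)) ->
  O (x, y) -> is_derive (K := C_AbsRing) h (x, y) (a, b) -> frame_rotated th x y a b.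
Proof.
  intros Hrho Oz Hd. destruct (Htrans _ Oz) as (Hzi & Hw & Ecp & _).
  destruct (is_derive3_f_gam x y a b Oz Hd) as (Dx & Dy).
  assert (EF : f (cpar A j (h (x, y))) = iso_act p th (f (cpar A i (x, y)))) by (rewrite Ecp; apply Hrho).
  assert (Ex : vcomb a b (Fx A f j (h (x, y))) (Fy A f j (h (x, y))) = iso_act_d p th (Fx A f i (x, y))).
  { apply (is_derive3_unique_loc _ _ _ _ _ Dx
      (is_derive3_iso_act p th _ _ _ (is_derive3_f_x _ _ _ Hopen Hsmooth i (x, y) Hzi))).
    apply filter_forall. intro t. apply Hrho. }
  assert (Ey : vcomb (- b) a (Fx A f j (h (x, y))) (Fy A f j (h (x, y))) = iso_act_d p th (Fy A f i (x, y))).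
  { apply (is_derive3_unique_loc _ _ _ _ _ Dy
      (is_derive3_iso_act p th _ _ _ (is_derive3_f_y _ _ _ Hopen Hsmooth i (x, y) Hzi))).
    apply filter_forall. intro t. apply Hrho. }
  unfold frame_rotated, Lx, Ly. split; rewrite <- left_comp_vcomb, <- (left_comp_iso_act p), EF; f_equal; symmetry; assumption.
Qed.

Lemma unit_normal_rotated_of_frame th x y a b : O (x, y) -> frame_rotated th x y a b ->
  unit_normal A f j (h (x, y)) = fiber_rot th (unit_normal A f i (x, y)).
Proof.
  intros Oz (RX & RY). destruct (Htrans _ Oz) as (Hzi & Hw & _).
  destruct (conformal_at _ _ _ Hconf j _ Hw) as (Cj1 & Cj2 & Cj3).
  assert (Hab : 0 < a * a + b * b).
  { assert (P := proj1 (proj2 (conformal_at _ _ _ Hconf i _ Hzi))).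
    rewrite <- (dot3_fiber_rot th), RX, dot3_vcomb_conformal in P by assumption. nra. }
  rewrite !unit_normal_normalize, <- normalize_fiber_rot, <- fiber_rot_cross3, RX, RY,
    cross3_vcomb_rotation, normalize_scale by auto using dot3_cross3_Lx_Ly_pos.
  reflexivity.
Qed.

Lemma frame_rotated_of_unit_normal th x y a b :
  (forall z, O z -> unit_normal A f j (h z) = fiber_rot th (unit_normal A f i z)) ->
  O (x, y) -> is_derive (K := C_AbsRing) h (x, y) (a, b) -> frame_rotated th x y a b.
Proof.
  intros HN Oz Hd. destruct (Htrans _ Oz) as (Hzi & Hw & _).
  assert (Hpos := dot3_cross3_Lx_Ly_pos _ _ _ Hconf j _ Hw).
  assert (EX : vcomb a b (N_x X A f j (h (x, y))) (N_y X A f j (h (x, y))) = fiber_rot th (N_x X A f i (x, y))).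
  { apply (is_derive3_unique_loc _ _ _ _ _ (is_derive3_unit_normal_curve _ _ _ _ _ _ _ _
      (curve_velocity_holo_x _ _ _ Hopen Hsmooth j h (x, y) a b Hd Hw) Hpos)
      (is_derive3_fiber_rot th _ _ _ (is_derive3_unit_normal_x _ _ _ Hopen Hsmooth Hconf i _ Hzi))).
    apply filter_imp with (2 := open_locally_x O x y HO Oz). intros t Ot. apply HN, Ot. }
  assert (EY : vcomb (- b) a (N_x X A f j (h (x, y))) (N_y X A f j (h (x, y))) = fiber_rot th (N_y X A f i (x, y))).
  { apply (is_derive3_unique_loc _ _ _ _ _ (is_derive3_unit_normal_curve _ _ _ _ _ _ _ _
      (curve_velocity_holo_y _ _ _ Hopen Hsmooth j h (x, y) a b Hd Hw) Hpos)
      (is_derive3_fiber_rot th _ _ _ (is_derive3_unit_normal_y _ _ _ Hopen Hsmooth Hconf i _ Hzi))).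
    apply filter_imp with (2 := open_locally_y O x y HO Oz). intros t Ot. apply HN, Ot. }
  set (m := unit_normal A f j (h (x, y))).
  assert (Hm : m = fiber_rot th (unit_normal A f i (x, y))) by (apply HN, Oz).
  destruct (unit_normal_unit_upper j _ Hw) as (Um & _).
  destruct (conformal_at _ _ _ Hconf i _ Hzi) as (Ci1 & Ci2 & Ci3).
  destruct (conformal_at _ _ _ Hconf j _ Hw) as (Cj1 & Cj2 & Cj3).
  assert (LYj : Ly A f j (h (x, y)) = cross3 m (Lx A f j (h (x, y))))
    by (apply cross3_normalize_conformal; auto).
  assert (LYi : Ly A f i (x, y) = cross3 (unit_normal A f i (x, y)) (Lx A f i (x, y)))
    by (apply cross3_normalize_conformal; auto).
  assert (RX : fiber_rot th (Lx A f i (x, y)) = vcomb a b (Lx A f j (h (x, y))) (Ly A f j (h (x, y)))).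
  { rewrite (Lx_tangent i _ Hzi), LYj, (Lx_tangent j _ Hw).
    apply fiber_rot_tangent_of_normal; auto. apply dot3_normalize_d, Hpos. }
  split; [exact RX |].
  rewrite LYi, <- fiber_rot_cross3, <- Hm, RX. apply cross3_unit_vcomb; auto.
  apply dot3_normalize_cross3_l.
Qed.

Lemma iso_defect_partials_zero th x y a b : O (x, y) -> is_derive (K := C_AbsRing) h (x, y) (a, b) ->
  frame_rotated th x y a b ->
  is_derive3 (fun t => iso_defect th (cpar A i (t, y))) x (0, 0, 0) /\
  is_derive3 (fun t => iso_defect th (cpar A i (x, t))) y (0, 0, 0).
Proof.
  intros Oz Hd (RX & RY). destruct (Htrans _ Oz) as (Hzi & Hw & Ecp & _).
  destruct (is_derive3_f_gam x y a b Oz Hd) as (Dx & Dy). split.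
  - assert (D := is_derive3_mul_inv _ _ _ _ _ Dx
      (is_derive3_fiber_rot th _ _ _ (is_derive3_f_x _ _ _ Hopen Hsmooth i _ Hzi))).
    rewrite mul_inv_d_zero in D; [exact D |]. cbv beta.
    rewrite <- Ecp, left_comp_vcomb, left_comp_fiber_rot. symmetry. exact RX.
  - assert (D := is_derive3_mul_inv _ _ _ _ _ Dy
      (is_derive3_fiber_rot th _ _ _ (is_derive3_f_y _ _ _ Hopen Hsmooth i _ Hzi))).
    rewrite mul_inv_d_zero in D; [exact D |]. cbv beta.
    rewrite <- Ecp, left_comp_vcomb, left_comp_fiber_rot. symmetry. exact RY.
Qed.

Lemma unit_normal_rotated_of_gauss_map th : (forall x, g (gam x) = Cmult (eitheta th) (g x)) ->
  forall z, O z -> unit_normal A f j (h z) = fiber_rot th (unit_normal A f i z).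
Proof.
  intros Hgs z Oz. destruct (Htrans z Oz) as (Hzi & Hw & Ecp & _).
  destruct (unit_normal_unit_upper j _ Hw) as (U1 & P1), (unit_normal_unit_upper i _ Hzi) as (U2 & P2).
  apply stereo_inj; [exact U1 | rewrite dot3_fiber_rot; exact U2 | exact P1 | exact P2 |].
  rewrite stereo_fiber_rot, <- (Hg j _ Hw), <- (Hg i _ Hzi), Ecp. apply Hgs.
Qed.

End Transition.

Lemma gauss_map_equivariant p th : (forall x, f (gam x) = iso_act p th (f x)) ->
  forall x, g (gam x) = Cmult (eitheta th) (g x).
Proof.
  intros Hrho x. pose proof Hrs as (_ & _ & Hcov & _).
  destruct (Hcov x) as (i & z & Hz & <-).
  destruct (gam_chart_transition i z Hz) as (j & h & O & HO & Oz & Htrans).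
  destruct (Htrans z Oz) as (Hzi & Hw & Ecp & [[a b] Hd]). destruct z as [x y].
  rewrite <- Ecp, (Hg j _ Hw), (Hg i _ Hzi), <- stereo_fiber_rot. f_equal.
  apply (unit_normal_rotated_of_frame i j h O Htrans th x y a b Oz).
  exact (frame_rotated_of_iso i j h O HO Htrans p th x y a b Hrho Oz Hd).
Qed.

Lemma iso_defect_locally_const th : (forall x, g (gam x) = Cmult (eitheta th) (g x)) ->
  forall i z, cdom A i z ->
  locally z (fun w => cdom A i w /\ iso_defect th (cpar A i w) = iso_defect th (cpar A i z)).
Proof.
  intros Hgs i z Hz. destruct (gam_chart_transition i z Hz) as (j & h & O & HO & Oz & Htrans).
  assert (HN := unit_normal_rotated_of_gauss_map i j h O Htrans th Hgs).
  apply filter_and; [exact (Hopen i z Hz) |].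
  assert (B := locally_2d_const3_of_partials_zero (fun w => iso_defect th (cpar A i w)) O z HO Oz).
  apply locally_2d_locally in B; [destruct z; revert B; apply filter_imp; now intros [a b] |].
  intros x y Oxy. destruct (Htrans _ Oxy) as (_ & _ & _ & [[a b] Hd]).
  apply (iso_defect_partials_zero i j h O HO Htrans th x y a b Oxy Hd).
  exact (frame_rotated_of_unit_normal i j h O HO Htrans th x y a b HN Oxy Hd).
Qed.

Lemma iso_equivariant_of_gauss_map th : (forall x, g (gam x) = Cmult (eitheta th) (g x)) ->
  exists p : Nil3, forall x, f (gam x) = iso_act p th (f x).
Proof.
  intros Hgs. destruct (classic (exists x0 : X, True)) as [[x0 _] | Hempty].
  - exists (iso_defect th x0).
    assert (Hconst : forall x, iso_defect th x = iso_defect th x0).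
    { pose proof Hrs as (_ & _ & _ & _ & _ & Hconn).
      apply (Hconn (fun x => iso_defect th x = iso_defect th x0) (fun x => iso_defect th x <> iso_defect th x0));
        [ intros i z (Hz & E) .. | intro x; apply classic | intros x (E & NE); exact (NE E) | now exists x0 ];
        (apply filter_imp with (2 := iso_defect_locally_const th Hgs i z Hz);
         intros w (Hw & E'); split; [exact Hw | rewrite E'; exact E]). }
    intro x. rewrite <- (Hconst x). unfold iso_act. symmetry. apply nil_mul_inv_mul.
  - exists (0, 0, 0). intro x. exfalso. apply Hempty. now exists x.
Qed.

End Main.

Theorem theorem1p1 (X : Type) (A : atlas X) (f : X -> Nil3) (g : X -> C)
  (gam : X -> X) :
  riemann_surface A ->
  conformal_immersion A f -> minimal A f ->
  nowhere_vertical A f -> upward_normal A f ->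
  is_normal_gauss_map A f g ->
  automorphism A gam ->
  (forall (p : Nil3) (theta : R),
      (forall x, f (gam x) = iso_act p theta (f x)) ->
      forall x, g (gam x) = Cmult (eitheta theta) (g x)) /\
  (forall theta : R,
      (forall x, g (gam x) = Cmult (eitheta theta) (g x)) ->
      exists p : Nil3, forall x, f (gam x) = iso_act p theta (f x)).
Proof.
  intros Hrs Hconf Hmin Hnv Hup Hg Haut. split.
  - exact (gauss_map_equivariant X A f g gam Hrs Hconf Hg Haut).
  - exact (iso_equivariant_of_gauss_map X A f g gam Hrs Hconf Hmin Hnv Hup Hg Haut).
Qed.
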